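(* Let $H$ be the real vector space of Hermitian matrices on a finite-dimensional system with inner product $\langle A,B\rangle=\mathrm{Tr}(AB)$. Let $\mathcal{K}\subset H$ be a proper convex cone (closed, convex, pointed, with nonempty interior) and $\mathcal{F}\subset H$ a compact set such that $\{\lambda Z:0\le\lambda\le1,\ Z\in\mathcal{F}\}$ is convex and $\mathcal{F}\cap\mathrm{int}(\mathcal{K})\neq\emptyset$. Define $R^{\mathcal{F}}_{\mathcal{K}}(\mathcal{E}):=\inf\{\lambda\in\mathbb{R}_+:\ (\mathcal{E}+\lambda\mathcal{E}')/(1+\lambda)\in\mathcal{F},\ \mathcal{E}'\in\mathcal{K}\}$ and $\mathcal{N}:=\{\mathcal{E}\in H:\ \delta Z-\mathcal{E}\notin\mathcal{K}\ \ \forall\delta<1,\ Z\in\mathcal{F}\}$. Let $\mathcal{X}\subseteq H$ be any set with $\{\lambda\varphi:\lambda\in\mathbb{R}_+,\ \varphi\in\mathcal{X}\}=\mathcal{K}^*$. If $\mathcal{E}\in\mathcal{N}$, then $$\max_{\varphi\in\mathcal{X}\setminus\{0\}}\frac{\langle\varphi,\mathcal{E}\rangle}{\max_{Z\in\mathcal{F}}\langle\varphi,Z\rangle}=1+R^{\mathcal{F}}_{\mathcal{K}}(\mathcal{E}).$$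
   Context: $\mathcal{K}^*:=\{\varphi\in H:\langle\varphi,x\rangle\ge0\ \forall x\in\mathcal{K}\}$ is the dual cone; $\mathrm{int}$ denotes interior; $\mathbb{R}_+$ the nonnegative reals. *)

From HB Require Import structures.
From mathcomp Require Import all_boot all_order all_algebra.
From mathcomp Require Import all_classical all_reals all_analysis.
From mathcomp Require Import complex.
Set Implicit Arguments. Unset Strict Implicit. Unset Printing Implicit Defensive.
Import Order.TTheory GRing.Theory Num.Theory.
Import numFieldNormedType.Exports.
Local Open Scope classical_set_scope.
Local Open Scope ring_scope.
Local Open Scope complex_scope.

Definition herm (R : realType) (n : nat) : set 'M[R[i]]_n :=
  [set A | (map_mx (fun z : R[i] => z^*) A)^T = A].

(* Hilbert-Schmidt inner product <A,B> = Tr(AB) (real for Hermitian A,B) *)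
Definition ip (R : realType) (n : nat) (A B : 'M[R[i]]_n) : R :=
  complex.Re (\tr (A *m B)).

Definition rscale (R : realType) (n : nat) (l : R) (A : 'M[R[i]]_n) : 'M[R[i]]_n :=
  (l%:C) *: A.

(* Standard (Euclidean) topology on complex matrices, transported through the
   real-linear bijection A |-> (Re A, Im A) onto 'M[R]_n * 'M[R]_n. *)
Definition coords (R : realType) (n : nat) (A : 'M[R[i]]_n) :
  'M[R]_n * 'M[R]_n :=
  (map_mx (@complex.Re R) A, map_mx (@complex.Im R) A).

Definition mx_compact (R : realType) (n : nat) (S : set 'M[R[i]]_n) : Prop :=
  compact (coords (n:=n) @` S).

Definition mx_closed (R : realType) (n : nat) (S : set 'M[R[i]]_n) : Prop :=
  closed (coords (n:=n) @` S).

(* interior of S relative to the space H of Hermitian matrices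
   (subspace topology) *)
Definition herm_interior (R : realType) (n : nat) (S : set 'M[R[i]]_n) :
  set 'M[R[i]]_n :=
  [set A | herm A /\ exists U : set ('M[R]_n * 'M[R]_n),
      open U /\ U (coords A) /\ (forall B, herm B -> U (coords B) -> S B)].

Definition proper_cone (R : realType) (n : nat) (K : set 'M[R[i]]_n) : Prop :=
  K `<=` @herm R n /\
  (forall l A, 0 <= l -> K A -> K (rscale l A)) /\
  (forall A B, K A -> K B -> K (A + B)) /\
  mx_closed K /\
  (forall A, K A -> K (- A) -> A = 0) /\
  herm_interior K !=set0.

Definition dual_cone (R : realType) (n : nat) (K : set 'M[R[i]]_n) :
  set 'M[R[i]]_n :=
  [set phi | herm phi /\ forall X, K X -> 0 <= ip phi X].

Definition real_convex (R : realType) (n : nat) (S : set 'M[R[i]]_n) : Prop :=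
  forall A B (t : R), S A -> S B -> 0 <= t <= 1 ->
    S (rscale t A + rscale (1 - t) B).

Definition shrink_hull (R : realType) (n : nat) (F : set 'M[R[i]]_n) :
  set 'M[R[i]]_n :=
  [set A | exists l Z, 0 <= l <= 1 /\ F Z /\ A = rscale l Z].

Definition robustness (R : realType) (n : nat) (K F : set 'M[R[i]]_n)
  (E : 'M[R[i]]_n) : R :=
  inf [set l : R | 0 <= l /\ exists E', K E' /\
        F (rscale (1 + l)^-1 (E + rscale l E'))].

Definition Nset (R : realType) (n : nat) (K F : set 'M[R[i]]_n) :
  set 'M[R[i]]_n :=
  [set E | herm E /\ forall (d : R) Z, d < 1 -> F Z -> ~ K (rscale d Z - E)].

(* max_{Z in F} <phi, Z> (attained since F is compact) *)
Definition support_fn (R : realType) (n : nat) (F : set 'M[R[i]]_n)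
  (phi : 'M[R[i]]_n) : R :=
  sup [set ip phi Z | Z in F].

(** The inequality [<=] is elementary: if
   [(E + l E') / (1 + l) = W] with [W] in [F] and [E'] in [K], then for every
   [phi] in the dual cone [<phi, E> <= (1 + l) <phi, W> <= (1 + l) h_F(phi)],
   where [h_F] is the support function of [F].
   For the converse put [t = 1 + R(E)].  Because [E] is in [N], for every
   [eps > 0] the compact convex set [t S - E - eps Z0] (where [S] is the
   shrink hull of [F] and [Z0] an interior point of [K]) misses [K]; a
   nearest-point argument separates the two by some [psi] in the dual cone,
   which the interior point lets us normalise to [<psi, Z0> = 1].  Normalised
   dual vectors form a compact set, so letting [eps] go to [0] yields [psi]
   with [t h_F(psi) <= <psi, E>]; writing [psi] as a nonnegative multiple of
   an element of [X] gives the maximiser. *)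

From HB Require Import structures.
From mathcomp Require Import all_boot all_order all_algebra.
From mathcomp Require Import all_classical all_reals all_analysis.
From mathcomp Require Import complex.
From mathcomp Require Import ring lra.
Import Order.TTheory GRing.Theory Num.Theory.
Import numFieldNormedType.Exports.
Local Open Scope classical_set_scope.
Local Open Scope ring_scope.
Set Implicit Arguments. Unset Strict Implicit. Unset Printing Implicit Defensive.

Section HermitianCoordinates.
Variables (R : realType) (m : nat).
Local Open Scope complex_scope.
Local Notation M := 'M[R[i]]_m.
Local Notation W := ('M[R]_m * 'M[R]_m)%type.
Implicit Types (A B C : M) (x y : W).

Lemma Re_realM (l : R) (z : R[i]) : complex.Re (l%:C * z) = l * complex.Re z.
Proof. by case: z => a b /=; ring. Qed.

Lemma Im_realM (l : R) (z : R[i]) : complex.Im (l%:C * z) = l * complex.Im z.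
Proof. by case: z => a b /=; ring. Qed.

Lemma Re_mulJ (z w : R[i]) :
  complex.Re (z * w^*) = complex.Re z * complex.Re w + complex.Im z * complex.Im w.
Proof. by case: z => a b; case: w => c d /=; ring. Qed.

Lemma hermE A : herm A <-> forall i j, A j i = (A i j)^*.
Proof.
split=> [hA i j | hA]; first by rewrite -{1}hA !mxE.
by apply/matrixP => i j; rewrite !mxE hA conjcK.
Qed.

Lemma herm0 : herm (0 : M).
Proof. by apply/hermE => i j; rewrite !mxE rmorph0. Qed.

Lemma hermD A B : herm A -> herm B -> herm (A + B).
Proof. by move=> /hermE hA /hermE hB; apply/hermE => i j; rewrite !mxE hA hB rmorphD. Qed.

Lemma hermN A : herm A -> herm (- A).
Proof. by move=> /hermE hA; apply/hermE => i j; rewrite !mxE hA rmorphN. Qed.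

Lemma hermB A B : herm A -> herm B -> herm (A - B).
Proof. by move=> hA hB; apply/hermD/hermN. Qed.

Lemma hermZ (l : R) A : herm A -> herm (rscale l A).
Proof.
move=> /hermE hA; apply/hermE => i j; rewrite !mxE hA.
by case: (A i j) => a b /=; congr (_ +i* _); ring.
Qed.

Lemma ipC A B : ip A B = ip B A.
Proof. by rewrite /ip mxtrace_mulC. Qed.

Lemma ipDl A B C : ip (A + B) C = ip A C + ip B C.
Proof. by rewrite /ip mulmxDl mxtraceD raddfD. Qed.

Lemma ipNl A B : ip (- A) B = - ip A B.
Proof. by rewrite /ip mulNmx !raddfN. Qed.

Lemma ipZl (l : R) A B : ip (rscale l A) B = l * ip A B.
Proof. by rewrite /ip -scalemxAl mxtraceZ Re_realM. Qed.

Lemma ipBl A B C : ip (A - B) C = ip A C - ip B C.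
Proof. by rewrite ipDl ipNl. Qed.

Lemma ipDr A B C : ip A (B + C) = ip A B + ip A C.
Proof. by rewrite ipC ipDl !(ipC A). Qed.

Lemma ipNr A B : ip A (- B) = - ip A B.
Proof. by rewrite ipC ipNl ipC. Qed.

Lemma ipBr A B C : ip A (B - C) = ip A B - ip A C.
Proof. by rewrite ipDr ipNr. Qed.

Lemma ipZr (l : R) A B : ip A (rscale l B) = l * ip A B.
Proof. by rewrite ipC ipZl ipC. Qed.

Lemma ip0l A : ip 0 A = 0.
Proof. by rewrite /ip mul0mx mxtrace0. Qed.

Lemma ip_add_scale A B (t : R) :
  ip (A + rscale t B) (A + rscale t B) = ip A A + 2 * t * ip A B + t ^+ 2 * ip B B.
Proof. by rewrite ipDl !ipDr !ipZl !ipZr (ipC B A); ring. Qed.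

Definition uncoords x : M := \matrix_(i, j) (x.1 i j +i* x.2 i j).

Lemma coords1E A i j : (coords A).1 i j = complex.Re (A i j).
Proof. by rewrite mxE. Qed.

Lemma coords2E A i j : (coords A).2 i j = complex.Im (A i j).
Proof. by rewrite mxE. Qed.

Lemma uncoordsK : cancel uncoords (@coords R m).
Proof. by case=> a b; congr (_, _); apply/matrixP => i j; rewrite !mxE. Qed.

Lemma coordsK : cancel (@coords R m) uncoords.
Proof. by move=> A; apply/matrixP => i j; rewrite mxE coords1E coords2E; case: (A i j). Qed.

Lemma coords_inj : injective (@coords R m).
Proof. exact: can_inj coordsK. Qed.

Lemma coords0 : coords (0 : M) = 0.
Proof. by rewrite /coords !map_mx0. Qed.

Lemma coordsD A B : coords (A + B) = coords A + coords B.
Proof. by rewrite /coords !map_mxD. Qed.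

Lemma coordsN A : coords (- A) = - coords A.
Proof. by rewrite /coords !map_mxN. Qed.

Lemma coordsB A B : coords (A - B) = coords A - coords B.
Proof. by rewrite coordsD coordsN. Qed.

Lemma coordsZ (l : R) A : coords (rscale l A) = l *: coords A.
Proof.
by congr (_, _); apply/matrixP => i j; rewrite !mxE ?Re_realM ?Im_realM.
Qed.

Definition herm_coords x :=
  forall i j, x.1 j i = x.1 i j /\ x.2 j i = - x.2 i j.

Lemma herm_coordsE A : herm A <-> herm_coords (coords A).
Proof.
rewrite hermE; split=> hA i j.
  by rewrite !coords1E !coords2E hA; case: (A i j).
have [] := hA i j; rewrite !coords1E !coords2E.
by case: (A j i) (A i j) => a b [c d] /= -> ->.
Qed.

Definition dotW x y := \sum_i \sum_j (x.1 i j * y.1 i j + x.2 i j * y.2 i j).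

Lemma ip_coords A B : herm B -> ip A B = dotW (coords A) (coords B).
Proof.
move=> /hermE hB; rewrite /ip /mxtrace raddf_sum; apply: eq_bigr => i _.
rewrite mxE raddf_sum; apply: eq_bigr => j _.
by rewrite hB /= Re_mulJ !coords1E !coords2E.
Qed.

Lemma dotW_entry_le x i j :
  x.1 i j ^+ 2 + x.2 i j ^+ 2 <= dotW x x.
Proof.
have sq_ge0 (a : R) : 0 <= a * a by rewrite -expr2 sqr_ge0.
have term_ge0 k l : 0 <= x.1 k l * x.1 k l + x.2 k l * x.2 k l by rewrite addr_ge0.
rewrite !expr2 /dotW (bigD1 i) //= (bigD1 j) //= -addrA lerDl.
by rewrite addr_ge0 ?sumr_ge0 // => k _; rewrite sumr_ge0.
Qed.

Lemma dotW_ge0 x : 0 <= dotW x x.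
Proof.
by apply: sumr_ge0 => i _; apply: sumr_ge0 => j _; rewrite -!expr2 addr_ge0 ?sqr_ge0.
Qed.

Lemma dotW_eq0 x : dotW x x = 0 -> x = 0.
Proof.
case: x => a b h; congr (_, _); apply/matrixP => i j; rewrite mxE;
  have := dotW_entry_le (a, b) i j; rewrite h /= => hle; apply/eqP;
  rewrite -sqrf_eq0 eq_le sqr_ge0 andbT.
  by rewrite (le_trans _ hle) // lerDl sqr_ge0.
by rewrite (le_trans _ hle) // lerDr sqr_ge0.
Qed.

Lemma ip_uncoords x B : herm B -> ip (uncoords x) B = dotW x (coords B).
Proof. by move=> hB; rewrite ip_coords // uncoordsK. Qed.

Lemma ip_ge0 A : herm A -> 0 <= ip A A.
Proof. by move=> hA; rewrite ip_coords // dotW_ge0. Qed.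

Lemma ip_eq0 A : herm A -> ip A A = 0 -> A = 0.
Proof. by move=> hA; rewrite ip_coords // => /dotW_eq0; rewrite -coords0 => /coords_inj. Qed.

Lemma ip_subr_ge A B : herm A -> herm B -> 6 * ip A A <= ip B B ->
  ip A A <= ip (A - B) (A - B).
Proof.
(* Expand [0 <= <2 A - B / 2, 2 A - B / 2>]. *)
move=> hA hB hAB; have := ip_ge0 (hermB (hermZ 2 hA) (hermZ (2^-1) hB)).
rewrite !(ipBl, ipBr, ipZl, ipZr) (ipC B A).
have := ip_ge0 hA; have h2 : 2 * 2^-1 = 1 :> R by rewrite mulfV.
nra.
Qed.

End HermitianCoordinates.

Ltac mx_ring := apply/matrixP => ? ?; rewrite /rscale !mxE; ring.

(* Going through [coords] leaves the side conditions of [field] in [R]. *)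
Ltac mx_field := apply: coords_inj; rewrite ?(coordsD, coordsN, coordsZ, coords0);
  congr (_, _); apply/matrixP => ? ?; rewrite !mxE; field.

Section RealScaling.
Variables (R : realType) (m : nat).
Implicit Types (A B : 'M[R[i]]_m) (S : set 'M[R[i]]_m).

Lemma rscaleA (a b : R) A :
  rscale a (rscale b A) = rscale (a * b) A.
Proof. by mx_ring. Qed.

Lemma rscale1 A : rscale 1 A = A.
Proof. by mx_ring. Qed.

Lemma rscaleDr (a : R) A B :
  rscale a (A + B) = rscale a A + rscale a B.
Proof. by mx_ring. Qed.

Lemma subset_shrink_hull S : S `<=` shrink_hull S.
Proof. by move=> Z SZ; exists 1, Z; split; [rewrite ler01 lexx | split=> //; mx_ring]. Qed.

End RealScaling.

Lemma ge0_of_quadratic (R : realFieldType) (a b : R) : 0 <= b ->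
  (forall t, 0 < t <= 1 -> 0 <= 2 * t * a + t ^+ 2 * b) -> 0 <= a.
Proof.
move=> b_ge0 hq; rewrite leNgt; apply/negP => a_lt0.
have ba_gt0 : 0 < b - a by lra.
pose t := - a / (b - a).
have t_gt0 : 0 < t by rewrite divr_gt0 // oppr_gt0.
have t_le1 : t <= 1 by rewrite ler_pdivrMr // mul1r; lra.
have tba : t * (b - a) = - a by rewrite mulfVK ?gt_eqF.
have := hq t; rewrite t_gt0 t_le1 => /(_ isT); nra.
Qed.

Lemma continuous_sum (R : realType) (T : topologicalType) (I : finType)
    (f : I -> T -> R) :
  (forall i, continuous (f i)) -> continuous (fun x => \sum_i f i x).
Proof.
move=> fc; rewrite -fct_sumE.
apply: (big_ind (fun g : T -> R => continuous g)) => // [x | g h gc hc x].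
  exact: cst_continuous.
exact: (continuousD (gc x) (hc x)).
Qed.

Lemma closed_le_continuous (R : realType) (T : topologicalType) (f g : T -> R) :
  continuous f -> continuous g -> closed [set x | f x <= g x].
Proof.
move=> fc gc; have -> : [set x | f x <= g x] = (g \- f) @^-1` [set r | 0 <= r].
  by apply/seteqP; split=> x /=; rewrite subr_ge0.
apply: preimage_closed; last exact: closed_ge.
by move=> x _; apply: cvgB; [exact: gc | exact: fc].
Qed.

Lemma closed_eq_continuous (R : realType) (T : topologicalType) (f g : T -> R) :
  continuous f -> continuous g -> closed [set x | f x = g x].
Proof.
move=> fc gc; have -> : [set x | f x = g x] = [set x | f x <= g x] `&` [set x | g x <= f x].
  by apply/seteqP; split=> x /=; [move=> -> | case=> *; apply/eqP; rewrite eq_le; apply/andP].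
by apply: closedI; apply: closed_le_continuous.
Qed.

Lemma continuous_mx_entrywise (R : realType) (T : topologicalType) (m n : nat)
    (f : T -> 'M[R]_(m, n)) :
  (forall i j, continuous (fun x => f x i j)) -> continuous f.
Proof.
move=> fc x A [P hP sPA]; apply: (@filterS _ _ _ [set y | forall i j, P i j (f y i j)]).
  by move=> y hy; apply: sPA.
by apply: filter_forall => i; apply: filter_forall => j; exact: fc.
Qed.

Lemma mx_box_compact (R : realType) (m n : nat) (c : R) :
  compact [set A : 'M[R]_(m, n) | forall i j, `|A i j| <= c].
Proof.
pose box := [set v : 'rV[R]_(m * n) | forall k, `[- c, c]%classic (v ord0 k)].
have -> : [set A : 'M[R]_(m, n) | forall i j, `|A i j| <= c] = vec_mx @` box.
  apply/seteqP; split=> [A hA | _ [v hv <-] i j].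
    exists (mxvec A); last by rewrite mxvecK.
    by move=> k; case/mxvec_indexP: k => i j; rewrite mxvecE /= in_itv /= -ler_norml.
  by rewrite mxE ler_norml; have := hv (mxvec_index i j); rewrite /= in_itv.
apply: continuous_compact; last first.
  exact: (@rV_compact _ _ (fun=> `[- c, c]%classic) (fun _ => @segment_compact R _ _)).
apply/continuous_subspaceT/continuous_mx_entrywise => i j v.
under [fun x => _]funext do rewrite mxE.
exact: coord_continuous.
Qed.

Lemma compact_meets_decreasing (R : realType) (T : topologicalType)
    (A : set T) (G : R -> set T) :
  compact A -> (forall e, 0 < e -> closed (G e)) ->
  (forall e e', 0 < e <= e' -> G e `<=` G e') ->
  (forall e, 0 < e -> A `&` G e !=set0) ->
  exists2 x, A x & forall e, 0 < e -> G e x.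
Proof.
move=> A_compact G_closed G_decr AG_nonempty.
have AG_finI : finI [set e | 0 < e] (fun e => A `&` G e).
  move=> D' D'_pos; pose e0 := \big[Num.min/1]_(e <- finmap.enum_fset D') e.
  have e0_gt0 : 0 < e0.
    rewrite /e0 big_seq; apply: (big_ind (fun x : R => 0 < x)) => // [a b a0 b0 | e De].
      by rewrite lt_min a0 b0.
    by have := D'_pos e De; rewrite inE.
  have [x [Ax Gx]] := AG_nonempty e0 e0_gt0.
  exists x => e De; split=> //; apply: G_decr Gx; rewrite e0_gt0 /=.
  by rewrite /e0; apply: ge_bigmin_seq.
have AG_filter e : 0 < e -> filter_from (finI_from [set e | 0 < e] (fun e => A `&` G e)) id
    (A `&` G e).
  by move=> e_gt0; exists (A `&` G e) => //; apply: finI_from1.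
have [|x [Ax x_cluster]] := A_compact _ (finI_filter AG_finI).
  by exists (A `&` G 1); [apply: finI_from1; rewrite /= ltr01 | move=> ? []].
exists x => // e e_gt0; apply: G_closed => // B xB.
by have [y [[_ Gy] By]] := x_cluster _ _ (AG_filter e e_gt0) xB; exists y.
Qed.

Section CoordinateTopology.
Variables (R : realType) (m : nat).
Local Notation W := ('M[R]_m * 'M[R]_m)%type.
Implicit Types (x : W) (S : set W) (r : R).

Lemma continuous_coord1 i j : continuous (fun x : W => x.1 i j).
Proof.
move=> x; apply: (@continuous_comp _ _ _ fst (fun A : 'M[R]_m => A i j)).
  by case: x => a b; apply: cvg_fst.
exact: coord_continuous.
Qed.

Lemma continuous_coord2 i j : continuous (fun x : W => x.2 i j).
Proof.
move=> x; apply: (@continuous_comp _ _ _ snd (fun A : 'M[R]_m => A i j)).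
  by case: x => a b; apply: cvg_snd.
exact: coord_continuous.
Qed.

Lemma continuous_dotW (T : topologicalType) (f g : T -> W) :
  continuous f -> continuous g -> continuous (fun t => dotW (f t) (g t)).
Proof.
move=> fc gc; apply: continuous_sum => i; apply: continuous_sum => j t.
have entry1 (h : T -> W) : continuous h -> continuous (fun s => (h s).1 i j).
  move=> hc s; apply: (@continuous_comp _ _ _ h (fun x : W => x.1 i j)).
    exact: hc.
  exact: continuous_coord1.
have entry2 (h : T -> W) : continuous h -> continuous (fun s => (h s).2 i j).
  move=> hc s; apply: (@continuous_comp _ _ _ h (fun x : W => x.2 i j)).
    exact: hc.
  exact: continuous_coord2.
by apply: cvgD; apply: cvgM; [apply: entry1 | apply: entry1 | apply: entry2 | apply: entry2].
Qed.

Lemma continuous_dotWl y : continuous (fun x => dotW x y).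
Proof. by apply: continuous_dotW => x; [exact: cvg_id | exact: cvg_cst]. Qed.

Lemma closed_herm_coords : closed [set x : W | herm_coords x].
Proof.
have -> : [set x : W | herm_coords x] = \bigcap_(i : 'I_m) \bigcap_(j : 'I_m)
    ([set x : W | x.1 j i = x.1 i j] `&` [set x : W | x.2 j i = - x.2 i j]).
  by apply/seteqP; split=> [x hx i _ j _ | x hx i j]; [exact: hx | exact: hx].
apply: closed_bigI => i _; apply: closed_bigI => j _.
apply: closedI.
  by apply: (closed_eq_continuous (f := fun x : W => x.1 j i)); exact: continuous_coord1.
apply: (closed_eq_continuous (f := fun x : W => x.2 j i) (g := fun x => - x.2 i j)).
  exact: continuous_coord2.
by move=> x; apply: cvgN; exact: continuous_coord2.
Qed.

Definition box (c : R) :=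
  [set x : W | forall i j, `|x.1 i j| <= c /\ `|x.2 i j| <= c].

Lemma box_compact c : compact (box c).
Proof.
have -> : box c = [set A : 'M[R]_m | forall i j, `|A i j| <= c] `*`
                  [set A : 'M[R]_m | forall i j, `|A i j| <= c].
  apply/seteqP; split=> x /=; first by move=> h; split=> i j; case: (h i j).
  by move=> [h1 h2] i j; split.
by apply: compact_setX; apply: mx_box_compact.
Qed.

Lemma closed_ball_dotW_compact S r : closed S -> compact (S `&` [set x | dotW x x <= r]).
Proof.
move=> S_closed; have ball_closed : closed (S `&` [set x | dotW x x <= r]).
  apply: closedI => //; apply: (closed_le_continuous (g := fun=> r)).
    by apply: continuous_dotW => y; exact: cvg_id.
  exact: cst_continuous.
apply: (subclosed_compact ball_closed (@box_compact (1 + r))).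
have abs_le (a : R) : `|a| <= 1 + a ^+ 2 by rewrite -real_normK ?num_real //; nra.
move=> x [_ /= xr] i j; have := dotW_entry_le x i j.
have := sqr_ge0 (x.1 i j); have := sqr_ge0 (x.2 i j) => ? ? ?.
by split; apply: (le_trans (abs_le _)); rewrite lerD2l; lra.
Qed.

Definition l1norm x := \sum_i \sum_j (`|x.1 i j| + `|x.2 i j|).

Lemma l1norm_entry_le x i j : `|x.1 i j| + `|x.2 i j| <= l1norm x.
Proof.
have term_ge0 k l : 0 <= `|x.1 k l| + `|x.2 k l| by rewrite addr_ge0.
rewrite /l1norm (bigD1 i) //= (bigD1 j) //= -addrA lerDl.
by rewrite addr_ge0 ?sumr_ge0 // => k _; rewrite sumr_ge0.
Qed.

Lemma l1norm_eq0 x : l1norm x = 0 -> x = 0.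
Proof.
case: x => a b h; congr (_, _); apply/matrixP => i j; rewrite mxE;
  have := l1norm_entry_le (a, b) i j; rewrite h /= => hle; apply/eqP;
  rewrite -normr_le0 (le_trans _ hle) //.
  by rewrite lerDl normr_ge0.
by rewrite lerDr normr_ge0.
Qed.

End CoordinateTopology.

Section HermitianSets.
Variables (R : realType) (m : nat).
Local Notation M := 'M[R[i]]_m.
Implicit Types (A B : M) (S : set M).

Lemma shrink_hull_herm S : S `<=` @herm R m -> shrink_hull S `<=` @herm R m.
Proof. by move=> hS _ [l [Z [_ [/hS hZ ->]]]]; apply: hermZ. Qed.

Lemma shrink_hull_compact S : mx_compact S -> mx_compact (shrink_hull S).
Proof.
rewrite /mx_compact => S_compact.
have -> : @coords R m @` shrink_hull S =
    (fun p : R * ('M[R]_m * 'M[R]_m) => p.1 *: p.2) @` (`[0, 1]%classic `*` @coords R m @` S).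
  apply/seteqP; split=> [_ [s [l [Z [l01 [SZ ->]]]] <-] | _ [[l y] [l01 [Z SZ <-]] <-]].
    by exists (l, coords Z); [split; [rewrite /= in_itv | exists Z] | rewrite coordsZ].
  by exists (rscale l Z); [exists l, Z; rewrite /= in_itv in l01 | rewrite coordsZ].
apply: continuous_compact; last exact: compact_setX (@segment_compact R _ _) S_compact.
by apply: continuous_subspaceT => -[l y]; apply: cvgZ; [apply: cvg_fst | apply: cvg_snd].
Qed.

Lemma affine_image_compact (a : R) B S :
  mx_compact S -> mx_compact [set rscale a s + B | s in S].
Proof.
rewrite /mx_compact => S_compact.
have -> : @coords R m @` [set rscale a s + B | s in S] =
    (fun y => a *: y + coords B) @` (@coords R m @` S).
  apply/seteqP; split=> [_ [_ [s Ss <-] <-] | _ [_ [s Ss <-] <-]].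
    by exists (coords s); [exists s | rewrite coordsD coordsZ].
  by exists (rscale a s + B); [exists s | rewrite coordsD coordsZ].
apply: continuous_compact S_compact; apply: continuous_subspaceT => y.
by apply: cvgD; [apply: cvgZ; [apply: cvg_cst | apply: cvg_id] | apply: cvg_cst].
Qed.

Lemma affine_image_convex (a : R) B S :
  real_convex S -> real_convex [set rscale a s + B | s in S].
Proof.
move=> S_convex _ _ t [s1 Ss1 <-] [s2 Ss2 <-] t01.
by exists (rscale t s1 + rscale (1 - t) s2); [exact: S_convex | mx_ring].
Qed.

Lemma support_fn_max S phi Zm : S Zm -> (forall Z, S Z -> ip phi Z <= ip phi Zm) ->
  support_fn S phi = ip phi Zm.
Proof.
move=> SZm Zm_max; apply/eqP; rewrite eq_le; apply/andP; split.
  by apply: ge_sup => [|_ [Z SZ <-]]; [exists (ip phi Zm), Zm | exact: Zm_max].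
by apply: ub_le_sup; [exists (ip phi Zm) => _ [Z SZ <-]; exact: Zm_max | exists Zm].
Qed.

Lemma support_fn_attained S phi : S `<=` @herm R m -> mx_compact S -> S !=set0 ->
  exists2 Zm, S Zm & (forall Z, S Z -> ip phi Z <= ip phi Zm).
Proof.
move=> S_herm S_compact [Z0 SZ0].
have [_ /set_mem [Zm SZm <-] Zm_max] : exists2 x, x \in @coords R m @` S &
    forall y, y \in @coords R m @` S -> dotW (coords phi) y <= dotW (coords phi) x.
  apply: compact_EVT_max => //; first by exists (coords Z0), Z0.
  by apply: continuous_subspaceT; apply: continuous_dotW => y; [exact: cvg_cst | exact: cvg_id].
exists Zm => // Z SZ; rewrite !ip_coords; [|exact: S_herm..].
by apply: Zm_max; rewrite inE; exists Z.
Qed.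

End HermitianSets.

Section NearestPointSeparation.
Variables (R : realType) (m : nat) (D K : set 'M[R[i]]_m).
Hypotheses (D_herm : D `<=` @herm R m) (K_herm : K `<=` @herm R m).
Hypotheses (D_compact : mx_compact D) (K_closed : mx_closed K).
Hypotheses (D_nonempty : D !=set0) (K0 : K 0) (D_convex : real_convex D).
Hypothesis K_scale : forall l A, 0 <= l -> K A -> K (rscale l A).
Hypothesis K_add : forall A B, K A -> K B -> K (A + B).

Local Notation M := 'M[R[i]]_m.

Lemma nearest_pair : exists2 ds, D ds & exists2 ks, K ks &
  forall d k, D d -> K k -> ip (ds - ks) (ds - ks) <= ip (d - k) (d - k).
Proof.
have [_ /set_mem [dmax _ <-] dmax_max] : exists2 x, x \in @coords R m @` D &
    forall y, y \in @coords R m @` D -> dotW y y <= dotW x x.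
  apply: compact_EVT_max => //; first by case: D_nonempty => d Dd; exists (coords d), d.
  by apply: continuous_subspaceT; apply: continuous_dotW => y; exact: cvg_id.
pose r := dotW (coords dmax) (coords dmax).
have D_bounded d : D d -> ip d d <= r.
  move=> Dd; rewrite ip_coords; last exact: D_herm.
  by apply: dmax_max; rewrite inE; exists d.
(* Points of [K] with [<k, k> > 6 r] are farther from [D] than [0] is (see
   [ip_subr_ge]), so the minimisation may be restricted to a compact part of [K]. *)
pose Kr := @coords R m @` K `&` [set x | dotW x x <= 6 * r].
have Kr_compact : compact Kr by apply: closed_ball_dotW_compact.
pose sqdist (p : ('M[R]_m * 'M[R]_m) * ('M[R]_m * 'M[R]_m)) :=
  dotW (p.1 - p.2) (p.1 - p.2).
have [[a b] ab_in pair_min] :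
    exists2 p, p \in @coords R m @` D `*` Kr &
    forall q, q \in @coords R m @` D `*` Kr -> sqdist p <= sqdist q.
  apply: compact_EVT_min; last 2 first.
  - exact: compact_setX.
  - apply: continuous_subspaceT; apply: continuous_dotW => q;
      by apply: cvgB; [exact: cvg_fst | exact: cvg_snd].
  case: D_nonempty => d Dd; exists (coords d, coords 0); split; first by exists d.
  split; [by exists 0 | rewrite /= -ip_coords; last exact: herm0].
  by rewrite ip0l mulr_ge0 ?dotW_ge0.
move: ab_in pair_min; rewrite inE /= => -[[ds Dds <-] [[ks Kks <-] _]] pair_min.
exists ds => //; exists ks => // d k Dd Kk.
have hD := D_herm Dd; have hK := K_herm Kk.
have pair_le k' : K k' -> ip k' k' <= 6 * r ->
    ip (ds - ks) (ds - ks) <= ip (d - k') (d - k').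
  move=> Kk' k'r; have hk' := K_herm Kk'.
  have hdk' := hermB hD hk'; have hdsks := hermB (D_herm Dds) (K_herm Kks).
  rewrite !ip_coords // !coordsB.
  apply: (pair_min (coords d, coords k')); rewrite inE; split; first by exists d.
  by split; [exists k' | rewrite /= -ip_coords].
have r_ge0 : 0 <= r by apply: dotW_ge0.
have [k_small | k_large] := lerP (ip k k) (6 * r); first exact: pair_le.
apply: le_trans (pair_le 0 K0 _) _; first by rewrite ip0l mulr_ge0.
rewrite subr0; apply: ip_subr_ge => //.
by rewrite (le_trans _ (ltW k_large)) // ler_wpM2l // D_bounded.
Qed.

Lemma nearest_pair_variational ds ks : D ds -> K ks ->
    (forall d k, D d -> K k -> ip (ds - ks) (ds - ks) <= ip (d - k) (d - k)) ->
  forall d k, D d -> K k -> ip (ds - ks) (ds - ks) <= ip (ds - ks) (d - k).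
Proof.
move=> Dds Kks ds_ks_min d k Dd Kk.
have hw := hermB (D_herm Dds) (K_herm Kks).
have hu := hermB (hermB (D_herm Dd) (K_herm Kk)) hw.
rewrite -subr_ge0 -ipBr; apply: (ge0_of_quadratic (ip_ge0 hu)) => t /andP [t_gt0 t_le1].
have t01 : 0 <= t <= 1 by rewrite ltW.
have t'_ge0 : 0 <= 1 - t by rewrite subr_ge0.
have := ds_ks_min _ _ (D_convex Dd Dds t01)
  (K_add (K_scale (ltW t_gt0) Kk) (K_scale t'_ge0 Kks)).
have -> : rscale t d + rscale (1 - t) ds - (rscale t k + rscale (1 - t) ks) =
    (ds - ks) + rscale t (d - k - (ds - ks)) by mx_ring.
by rewrite ip_add_scale; lra.
Qed.

Hypothesis DK_disjoint : forall d, D d -> ~ K d.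

Theorem nearest_point_separation : exists psi : M, herm psi /\
  (forall k, K k -> 0 <= ip psi k) /\ (forall d, D d -> ip psi d < 0).
Proof.
have [ds Dds [ks Kks ds_ks_min]] := nearest_pair.
have [w [hw [w_gt0 var]]] : exists w, herm w /\ 0 < ip w w /\
    forall d k, D d -> K k -> ip w w <= ip w (d - k).
  have hw := hermB (D_herm Dds) (K_herm Kks).
  exists (ds - ks); split=> //; split; last exact: nearest_pair_variational.
  rewrite lt_def ip_ge0 // andbT; apply/eqP => /(ip_eq0 hw)/subr0_eq ds_ks.
  by apply: (DK_disjoint Dds); rewrite ds_ks.
exists (- w); split; first exact: hermN.
split=> [k Kk | d Dd]; rewrite ipNl; last by have := var d 0 Dd K0; rewrite subr0; lra.
rewrite oppr_ge0 leNgt; apply/negP => wk_gt0.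
pose l := (`|ip w ds| + 1) / ip w k.
have l_ge0 : 0 <= l by rewrite divr_ge0 // ltW.
have := var ds (rscale l k) Dds (K_scale l_ge0 Kk).
by rewrite ipBr ipZr /l mulfVK ?gt_eqF //; have := ler_norm (ip w ds); lra.
Qed.

End NearestPointSeparation.

Section InteriorPoint.
Variables (R : realType) (m : nat) (K : set 'M[R[i]]_m) (Z0 : 'M[R[i]]_m).
Hypothesis Z0_interior : herm_interior K Z0.
Local Notation M := 'M[R[i]]_m.

Lemma interior_ball : exists2 e : R, 0 < e & forall x : M, herm x ->
  (forall i j, `|(coords x).1 i j| < e /\ `|(coords x).2 i j| < e) -> K (Z0 + x).
Proof.
case: Z0_interior => hZ0 [U [U_open [UZ0 U_K]]].
have /nbhs_ballP [e e_gt0 ball_U] : nbhs (coords Z0) U by apply: open_nbhs_nbhs.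
exists e => // x hx x_small; apply: U_K; first exact: hermD.
apply: ball_U; rewrite coordsD; split; split=> // i j; have [? ?] := x_small i j;
  by rewrite /ball /= !mxE opprD addNKr normrN -?coords1E -?coords2E.
Qed.

Lemma interior_segment x : herm x ->
  exists2 eta : R, 0 < eta & forall t, 0 <= t <= eta -> K (Z0 + rscale t x).
Proof.
move=> hx; have [e e_gt0 ball_K] := interior_ball.
have n_ge0 : 0 <= l1norm (coords x) by apply: sumr_ge0 => i _; apply: sumr_ge0.
exists (e / (1 + l1norm (coords x))) => [|t /andP [t_ge0 t_le]].
  by rewrite divr_gt0 // ltr_wpDr.
apply: ball_K; first exact: hermZ.
have t_small : t * l1norm (coords x) < e.
  rewrite ler_pdivlMr ?ltr_wpDr // in t_le; nra.
move=> i j; rewrite coordsZ /= !mxE !normrM (ger0_norm t_ge0).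
have := l1norm_entry_le (coords x) i j; rewrite -!coords1E -!coords2E.
have := normr_ge0 ((coords x).1 i j); have := normr_ge0 ((coords x).2 i j).
by split; nra.
Qed.

Lemma dual_l1norm_bound : exists2 c : R, 0 < c & forall psi, herm psi ->
  (forall k, K k -> 0 <= ip psi k) -> c * l1norm (coords psi) <= ip psi Z0.
Proof.
(* [Z0 - (e/2) sgn(psi)] stays in [K], and [<psi, sgn(psi)>] is the l1 norm of [psi]. *)
have [e e_gt0 ball_K] := interior_ball.
exists (e / 2) => [|psi hpsi psi_dual]; first by rewrite divr_gt0.
pose sgn := uncoords (map_mx Num.sg (coords psi).1, map_mx Num.sg (coords psi).2).
have sgn_coords : coords sgn = (map_mx Num.sg (coords psi).1, map_mx Num.sg (coords psi).2).
  exact: uncoordsK.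
have hsgn : herm sgn.
  apply/herm_coordsE; rewrite sgn_coords => i j /=; rewrite !mxE.
  by have /hermE -> := hpsi; case: (psi i j) => a b /=; rewrite sgrN.
have psi_sgn : ip psi sgn = l1norm (coords psi).
  rewrite ip_coords // sgn_coords; apply: eq_bigr => i _; apply: eq_bigr => j _.
  by rewrite /= !mxE !normrEsg ![Num.sg _ * _]mulrC.
have sgn_small i j : `|(coords (rscale (- (e / 2)) sgn)).1 i j| < e /\
    `|(coords (rscale (- (e / 2)) sgn)).2 i j| < e.
  have e2_ge0 : 0 <= e / 2 by rewrite divr_ge0 ?ltW.
  have half_lt : e / 2 < e by rewrite ltr_pdivrMr //; lra.
  have sg_le1 (a : R) : `|Num.sg a| <= 1 by rewrite normr_sg; case: (_ != 0).
  rewrite coordsZ sgn_coords /= !mxE !normrM normrN (ger0_norm e2_ge0).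
  by split; apply: le_lt_trans half_lt; apply: ler_piMr.
have := psi_dual _ (ball_K _ (hermZ (- (e / 2)) hsgn) sgn_small).
by rewrite ipDr ipZr psi_sgn mulNr subr_ge0.
Qed.

Lemma dual_pos psi : herm psi -> (forall k, K k -> 0 <= ip psi k) -> psi != 0 ->
  0 < ip psi Z0.
Proof.
move=> hpsi psi_dual psi_neq0; have [c c_gt0 c_bound] := dual_l1norm_bound.
apply: lt_le_trans (c_bound _ hpsi psi_dual); rewrite mulr_gt0 // lt_def.
rewrite sumr_ge0 => [|i _]; last by apply: sumr_ge0.
by rewrite andbT; apply: contra psi_neq0 => /eqP/l1norm_eq0; rewrite -coords0 => /coords_inj ->.
Qed.

Lemma interior_in_cone : K Z0.
Proof.
have [e e_gt0 ball_K] := interior_ball.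
rewrite -[Z0]addr0; apply: ball_K; first exact: herm0.
by move=> i j; rewrite coords0 /= !mxE normr0.
Qed.

Hypothesis K_herm : K `<=` @herm R m.

Definition normalized_dual := [set x | herm_coords x] `&`
  ([set x | forall k, K k -> 0 <= dotW x (coords k)] `&` [set x | dotW x (coords Z0) = 1]).

Lemma coords_normalized_dual psi : herm psi -> (forall k, K k -> 0 <= ip psi k) ->
  ip psi Z0 = 1 -> normalized_dual (coords psi).
Proof.
move=> hpsi psi_dual psi_Z0; split; first exact/herm_coordsE.
split=> [k Kk|]; last by rewrite /= -ip_coords //; case: Z0_interior.
by rewrite -ip_coords; [exact: psi_dual | exact: K_herm].
Qed.

Lemma normalized_dualP x : normalized_dual x -> [/\ herm (uncoords x),
  forall k, K k -> 0 <= ip (uncoords x) k & ip (uncoords x) Z0 = 1].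
Proof.
move=> [hx [x_dual x_Z0]]; split; first by apply/herm_coordsE; rewrite uncoordsK.
  by move=> k Kk; rewrite ip_uncoords; [exact: x_dual | exact: K_herm].
by rewrite ip_uncoords //; case: Z0_interior.
Qed.

Lemma normalized_dual_compact : compact normalized_dual.
Proof.
have [c c_gt0 c_bound] := dual_l1norm_bound.
have closed_dual : closed normalized_dual.
  apply: closedI; first exact: closed_herm_coords.
  apply: closedI; last first.
    apply: (closed_eq_continuous (g := fun=> 1)); first exact: continuous_dotWl.
    exact: cst_continuous.
  apply: (@closed_bigI _ _ K (fun k => [set x | 0 <= dotW x (coords k)])) => k _.
  apply: (closed_le_continuous (f := fun=> 0)); first exact: cst_continuous.
  exact: continuous_dotWl.
apply: (subclosed_compact closed_dual (@box_compact _ _ c^-1)) => x /normalized_dualP.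
move=> [hx x_dual x_Z0]; have := c_bound _ hx x_dual; rewrite x_Z0 uncoordsK => x_small.
have x_le : l1norm x <= c^-1 by rewrite -(ler_pM2l c_gt0) mulfV ?gt_eqF.
move=> i j; have := l1norm_entry_le x i j.
have := normr_ge0 (x.1 i j); have := normr_ge0 (x.2 i j).
by split; lra.
Qed.

End InteriorPoint.

Section Robustness.
Variables (R : realType) (m : nat) (K F : set 'M[R[i]]_m) (E Z0 : 'M[R[i]]_m).
Hypothesis K_herm : K `<=` @herm R m.
Hypothesis K_scale : forall l A, 0 <= l -> K A -> K (rscale l A).
Hypothesis K_add : forall A B, K A -> K B -> K (A + B).
Hypothesis K_closed : mx_closed K.
Hypothesis F_herm : F `<=` @herm R m.
Hypothesis F_compact : mx_compact F.
Hypothesis F_convex : real_convex (shrink_hull F).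
Hypothesis F_Z0 : F Z0.
Hypothesis Z0_interior : herm_interior K Z0.
Hypothesis E_N : Nset K F E.
Local Notation M := 'M[R[i]]_m.
Local Notation tstar := (1 + robustness K F E).

Let feasible := [set l : R | 0 <= l /\ exists E', K E' /\
  F (rscale (1 + l)^-1 (E + rscale l E'))].

Lemma feasible_decomposition c W K2 : 1 < c -> F W -> K K2 ->
  E = rscale c W - K2 -> feasible (c - 1).
Proof.
move=> c_gt1 FW KK2 E_dec; split; first lra.
exists (rscale (c - 1)^-1 K2); split; first by apply: K_scale => //; rewrite invr_ge0; lra.
rewrite E_dec rscaleA mulfV ?subr_eq0 ?gt_eqF // rscale1 subrK addrC subrK.
by rewrite rscaleA mulVf ?gt_eqF ?rscale1 //; lra.
Qed.

Lemma feasible_nonempty : feasible !=set0.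
Proof.
have [eta eta_gt0 seg] := interior_segment Z0_interior (hermN (proj1 E_N)).
pose c := 1 + eta^-1.
have c_gt1 : 1 < c by rewrite ltrDl invr_gt0.
exists (c - 1); apply: (feasible_decomposition (K2 := rscale c Z0 - E) c_gt1 F_Z0).
  have c_inv : 0 <= c^-1 <= eta.
    rewrite invr_ge0 ltW ?(lt_trans ltr01) //= -[c^-1]mul1r ler_pdivrMr ?(lt_trans ltr01) //.
    by rewrite mulrDr mulr1 mulfV ?gt_eqF // lerDr ltW.
  have := K_scale (ltW (lt_trans ltr01 c_gt1)) (seg _ c_inv).
  by rewrite rscaleDr rscaleA mulfV ?gt_eqF ?(lt_trans ltr01) // rscale1.
by rewrite opprB addrC subrK.
Qed.

Lemma robustness_ge0 : 0 <= robustness K F E.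
Proof. by apply: lb_le_inf; [exact: feasible_nonempty | move=> l []]. Qed.

Lemma robustness_le l : feasible l -> robustness K F E <= l.
Proof. by move=> fl; apply: ge_inf => //; exists 0 => x []. Qed.

Lemma decomposition_ge1 c W K2 : F W -> K K2 -> E = rscale c W - K2 -> 1 <= c.
Proof.
move=> FW KK2 E_dec; rewrite leNgt; apply/negP => c_lt1.
by apply: (proj2 E_N c W c_lt1 FW); rewrite E_dec opprB addrC subrK.
Qed.

Lemma robustness_lt_of_slack c W K1 t : F W -> K K1 -> 0 < t ->
  K (K1 - rscale t W) -> E = rscale c W - K1 -> tstar < c.
Proof.
move=> FW KK1 t_gt0 K_slack E_dec.
have c_ge : 1 <= c - t.
  by apply: (decomposition_ge1 FW K_slack); rewrite E_dec; mx_ring.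
have K_half : K (K1 - rscale (t / 2) W).
  have half_ge0 : 0 <= 2^-1 :> R by rewrite invr_ge0.
  have := K_add (K_scale half_ge0 KK1) (K_scale half_ge0 K_slack).
  by congr K; mx_field.
have c_gt1 : 1 < c - t / 2 by lra.
have E_dec' : E = rscale (c - t / 2) W - (K1 - rscale (t / 2) W) by rewrite E_dec; mx_ring.
have := robustness_le (feasible_decomposition c_gt1 FW K_half E_dec'); lra.
Qed.

Lemma shrunk_not_in_cone eps s : 0 < eps -> shrink_hull F s ->
  ~ K (rscale tstar s - E - rscale eps Z0).
Proof.
(* A point of [K] here writes [E = (tstar mu) W - K1] with slack along [W],
   whence [tstar < tstar mu]. *)
move=> eps_gt0 [mu [W [/andP [mu_ge0 mu_le1] [FW ->]]]] Kk.
have [eta eta_gt0 seg] := interior_segment Z0_interior (hermN (F_herm FW)).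
set k := rscale tstar _ - E - _ in Kk.
have K1_in : K (k + rscale eps Z0).
  exact: K_add Kk (K_scale (ltW eps_gt0) (interior_in_cone Z0_interior)).
have slack : K (k + rscale eps Z0 - rscale (eps * eta) W).
  have eta_in : 0 <= eta <= eta by rewrite lexx ltW.
  have := K_add Kk (K_scale (ltW eps_gt0) (seg eta eta_in)).
  by congr K; mx_ring.
have E_dec : E = rscale (tstar * mu) W - (k + rscale eps Z0) by rewrite /k; mx_ring.
have := robustness_lt_of_slack FW K1_in (mulr_gt0 eps_gt0 eta_gt0) slack E_dec.
have := robustness_ge0; nra.
Qed.

Lemma approx_separation eps : 0 < eps -> exists psi : M, [/\ herm psi,
  forall k, K k -> 0 <= ip psi k, ip psi Z0 = 1 &
  forall Z, F Z -> tstar * ip psi Z <= ip psi E + eps].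
Proof.
move=> eps_gt0; have hE := proj1 E_N; have hZ0 := proj1 Z0_interior.
pose D := [set rscale tstar s + (- E - rscale eps Z0) | s in shrink_hull F].
have D_herm : D `<=` @herm R m.
  move=> _ [s /(shrink_hull_herm F_herm) hs <-].
  by apply/hermD/hermB; [apply: hermZ | apply: hermN | apply: hermZ].
have FD Z : F Z -> D (rscale tstar Z - E - rscale eps Z0).
  by move=> FZ; exists Z; [exact: subset_shrink_hull | mx_ring].
have DK d : D d -> ~ K d.
  by move=> [s Ss <-]; rewrite addrA; apply: shrunk_not_in_cone.
have K0 : K 0.
  by have := K_scale (lexx 0) (interior_in_cone Z0_interior); congr K; mx_ring.
have D_compact : mx_compact D by apply/affine_image_compact/shrink_hull_compact.
have D_convex : real_convex D by apply: affine_image_convex.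
have [psi [hpsi [psi_dual psi_neg]]] := nearest_point_separation D_herm K_herm
  D_compact K_closed (ex_intro _ _ (FD _ F_Z0)) K0 D_convex K_scale K_add DK.
have psi_neq0 : psi != 0.
  by apply/eqP => psi0; have := psi_neg _ (FD _ F_Z0); rewrite psi0 ip0l ltxx.
have psiZ0_gt0 := dual_pos Z0_interior hpsi psi_dual psi_neq0.
have inv_ge0 : 0 <= (ip psi Z0)^-1 by rewrite invr_ge0 ltW.
exists (rscale (ip psi Z0)^-1 psi); split.
- exact: hermZ.
- by move=> k Kk; rewrite ipZl mulr_ge0 ?psi_dual.
- by rewrite ipZl mulVf ?gt_eqF.
- move=> Z FZ; have := psi_neg _ (FD _ FZ); rewrite !ipBr !ipZr !ipZl => neg.
  have key : tstar * ip psi Z <= ip psi E + eps * ip psi Z0 by lra.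
  have := ler_wpM2l inv_ge0 key.
  by rewrite mulrCA mulrDr [_^-1 * (eps * _)]mulrCA mulVf ?gt_eqF // mulr1.
Qed.

Lemma exact_separation : exists psi : M, [/\ herm psi,
  forall k, K k -> 0 <= ip psi k, ip psi Z0 = 1 &
  forall Z, F Z -> tstar * ip psi Z <= ip psi E].
Proof.
have hE := proj1 E_N.
pose G e := [set x | forall Z, F Z -> tstar * dotW x (coords Z) <= dotW x (coords E) + e].
have G_closed e : 0 < e -> closed (G e).
  move=> _; apply: (@closed_bigI _ _ F (fun Z =>
    [set x | tstar * dotW x (coords Z) <= dotW x (coords E) + e])) => Z _.
  apply: closed_le_continuous => x.
    by apply: cvgM; [exact: cvg_cst | exact: continuous_dotWl].
  by apply: cvgD; [exact: continuous_dotWl | exact: cvg_cst].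
have G_decr e e' : 0 < e <= e' -> G e `<=` G e'.
  by move=> /andP [_ le_ee'] x Gx Z FZ; apply: le_trans (Gx Z FZ) _; rewrite lerD2l.
have dual_G e : 0 < e -> normalized_dual K Z0 `&` G e !=set0.
  move=> e_gt0; have [psi [hpsi psi_dual psi_Z0 psi_F]] := approx_separation e_gt0.
  exists (coords psi); split; first exact: coords_normalized_dual.
  by move=> Z FZ; rewrite -!ip_coords //; [exact: psi_F | exact: F_herm].
have [x /(normalized_dualP Z0_interior K_herm) [hx x_dual x_Z0] Gx] :=
  compact_meets_decreasing (normalized_dual_compact Z0_interior K_herm)
    G_closed G_decr dual_G.
exists (uncoords x); split=> // Z FZ.
apply/ler_addgt0Pr => e e_gt0; rewrite !ip_uncoords //; [exact: Gx | exact: F_herm].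
Qed.

Lemma support_ratio_le phi : herm phi -> (forall k, K k -> 0 <= ip phi k) ->
  phi != 0 -> ip phi E / support_fn F phi <= tstar.
Proof.
move=> hphi phi_dual phi_neq0.
have [Zm FZm Zm_max] := support_fn_attained phi F_herm F_compact (ex_intro _ _ F_Z0).
rewrite (support_fn_max FZm Zm_max).
have M_gt0 : 0 < ip phi Zm.
  exact: lt_le_trans (dual_pos Z0_interior hphi phi_dual phi_neq0) (Zm_max _ F_Z0).
suff : ip phi E / ip phi Zm - 1 <= robustness K F E by lra.
apply: lb_le_inf; first exact: feasible_nonempty.
move=> l [l_ge0 [E' [KE' FW]]]; have := phi_dual _ KE'.
have := Zm_max _ FW; rewrite ipZr ipDr ipZr mulrC ler_pdivrMr ?ltr_wpDr //.
rewrite lerBlDr ler_pdivrMr //; nra.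
Qed.

Lemma support_ratio_max (X : set M) :
  [set rscale l phi | l in [set l : R | 0 <= l] & phi in X] = dual_cone K ->
  (exists2 phi, (X `\ 0) phi & ip phi E / support_fn F phi = tstar) /\
  (forall phi, (X `\ 0) phi -> ip phi E / support_fn F phi <= tstar).
Proof.
move=> X_gen.
have X_dual phi : X phi -> dual_cone K phi.
  by move=> Xphi; rewrite -X_gen; exists 1; [exact: ler01 | exists phi; last exact: rscale1].
split; last first.
  by move=> phi [/X_dual [hphi phi_dual] /eqP phi_neq0]; exact: support_ratio_le.
have [psi [hpsi psi_dual psi_Z0 psi_F]] := exact_separation.
have : dual_cone K psi by split.
rewrite -X_gen => -[l l_ge0 [phi Xphi psi_eq]].
have [hphi phi_dual] := X_dual _ Xphi.
have [l_gt0 phi_neq0] : 0 < l /\ phi != 0.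
  have /eqP lZ0 : l * ip phi Z0 = 1 by rewrite -ipZl psi_eq.
  split; [rewrite lt_def l_ge0 andbT | ]; apply: contraTneq lZ0 => ->;
    by rewrite ?mul0r ?ip0l ?mulr0 eq_sym oner_eq0.
exists phi; first by split=> //; exact/eqP.
apply/eqP; rewrite eq_le support_ratio_le //=.
have [Zm FZm Zm_max] := support_fn_attained phi F_herm F_compact (ex_intro _ _ F_Z0).
rewrite (support_fn_max FZm Zm_max).
have M_gt0 : 0 < ip phi Zm.
  exact: lt_le_trans (dual_pos Z0_interior hphi phi_dual phi_neq0) (Zm_max _ F_Z0).
rewrite ler_pdivlMr //; have := psi_F _ FZm; rewrite -psi_eq !ipZl; nra.
Qed.

End Robustness.

Theorem lemma4 (R : realType) (n : nat) (K F X : set 'M[R[i]]_n.+1)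
  (E : 'M[R[i]]_n.+1) :
  proper_cone K ->
  F `<=` @herm R n.+1 -> mx_compact F ->
  real_convex (shrink_hull F) ->
  F `&` herm_interior K !=set0 ->
  X `<=` @herm R n.+1 ->
  [set rscale l phi | l in [set l : R | 0 <= l] & phi in X] = dual_cone K ->
  Nset K F E ->
  (exists2 phi, (X `\ 0) phi &
     ip phi E / support_fn F phi = 1 + robustness K F E) /\
  (forall phi, (X `\ 0) phi ->
     ip phi E / support_fn F phi <= 1 + robustness K F E).
Proof.
move=> [K_herm [K_scale [K_add [K_closed _]]]] F_herm F_compact F_convex.
move=> [Z0 [F_Z0 Z0_interior]] _ X_gen E_N.
exact: (support_ratio_max K_herm K_scale K_add K_closed F_herm F_compact F_convex
  F_Z0 Z0_interior E_N X_gen).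
Qed.
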